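(* Let $K$ be an oriented virtual knot diagram with a positive classical crossing $l$, and let $K'$ be the diagram obtained from $K$ by switching $l$ to a negative crossing. Then $\gamma(K)+\gamma(K')\equiv 0 \pmod 2$ (coefficientwise).
   Context: For an oriented virtual knot diagram $K$ and a classical crossing $c$ with sign $sgn(c)\in\{\pm1\}$, let $K_c$ be the two-component oriented virtual link diagram obtained by smoothing $c$ in the orientation-respecting way. Let $L(K_c)$ be the sum of the signs of all classical crossings of $K_c$ at which the two strands belong to different components, and $\bar L(K_c)=L(K_c)\bmod 2\in\{0,1\}$. Define $\gamma(K)=\sum_{c} t^{\bar L(K_c)}\,sgn(c)$, summing over all classical crossings, an element of the free $\mathbb{Z}$-module on $\{1,t\}$. *)

From mathcomp Require Import all_boot all_order all_algebra.
Set Implicit Arguments. Unset Strict Implicit. Unset Printing Implicit Defensive.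
Import Order.TTheory GRing.Theory Num.Theory.
Local Open Scope ring_scope.

(* An oriented virtual knot diagram with n classical crossings is encoded by
   its Gauss diagram (virtual crossings are not recorded): the cyclic word
   read along the knot, where each letter (c, b) records passing through
   crossing c : 'I_n as over-strand (b = true) or under-strand (b = false),
   together with the local sign of each classical crossing. *)
Record gauss_diagram (n : nat) := GaussDiagram {
  gd_word : seq ('I_n * bool);
  gd_sign : 'I_n -> int
}.

Definition wf_gauss n (K : gauss_diagram n) : Prop :=
  (forall c : 'I_n, count_mem (c, true) (gd_word K) = 1%N /\
                    count_mem (c, false) (gd_word K) = 1%N) /\
  (forall c : 'I_n, gd_sign K c = 1 \/ gd_sign K c = -1).

Definition gpos n (K : gauss_diagram n) (c : 'I_n) (b : bool) : nat :=
  index (c, b) (gd_word K).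

(* Smoothing c splits the circle into the arc strictly between the two
   passages through c and the complementary arc: these are the two
   components of K_c.  Crossing d (d != c) is a crossing between different
   components iff exactly one of its passages lies strictly inside that arc. *)
Definition inside_arc n (K : gauss_diagram n) (c : 'I_n) (p : nat) : bool :=
  (minn (gpos K c true) (gpos K c false) < p <
     maxn (gpos K c true) (gpos K c false))%N.

Definition mixed_crossing n (K : gauss_diagram n) (c d : 'I_n) : bool :=
  (d != c) && (inside_arc K c (gpos K d true) != inside_arc K c (gpos K d false)).

Definition Lsm n (K : gauss_diagram n) (c : 'I_n) : int :=
  \sum_(d : 'I_n | mixed_crossing K c d) gd_sign K d.

Definition Lbar n (K : gauss_diagram n) (c : 'I_n) : nat := odd `|Lsm K c|%N.

Definition gamma n (K : gauss_diagram n) : {poly int} :=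
  \sum_(c : 'I_n) (gd_sign K c)%:P * 'X^(Lbar K c).

Definition switch n (K : gauss_diagram n) (l : 'I_n) : gauss_diagram n :=
  GaussDiagram
    [seq (if p.1 == l then (p.1, ~~ p.2) else p) | p <- gd_word K]
    (fun c => if c == l then - gd_sign K c else gd_sign K c).

From mathcomp Require Import all_boot all_order all_algebra.
Import Order.TTheory GRing.Theory Num.Theory.
Local Open Scope ring_scope.

(* Switching l swaps its two passages but does not move any letter of the
   Gauss word, so the arc cut out by each smoothing and the set of mixed
   crossings are unchanged.  Only the sign of l flips, which changes every
   L(K_c) by 0 or 2 sgn(l), so the parities bar L(K_c) agree.  Hence gamma(K)
   and gamma(K') differ only in the coefficient of the crossing l itself, and
   their sum has coefficients sgn(c) + sgn'(c), which is 2 sgn(c) or 0. *)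

Lemma dvdz2_mulr2n (x : int) : (2 %| x *+ 2)%Z.
Proof. by apply/dvdzP; exists x; rewrite mulr_natr. Qed.

Section Switch.

Variables (n : nat) (K : gauss_diagram n) (l : 'I_n).

Lemma gpos_switch c b :
  gpos (switch K l) c b = gpos K c (if c == l then ~~ b else b).
Proof.
rewrite /gpos /=.
set f := fun p : 'I_n * bool => if p.1 == l then (p.1, ~~ p.2) else p.
have f_inv : involutive f.
  by case=> a b'; rewrite /f /=; case: (eqVneq a l) => [->|/negbTE->];
    rewrite ?eqxx ?negbK.
have -> : (c, b) = f (c, if c == l then ~~ b else b).
  by rewrite /f /=; case: eqP => //= _; rewrite negbK.
by rewrite index_map //; apply: inv_inj.
Qed.

Lemma inside_arc_switch c p : inside_arc (switch K l) c p = inside_arc K c p.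
Proof. by rewrite /inside_arc !gpos_switch; case: eqP => // _; rewrite minnC maxnC. Qed.

Lemma mixed_crossing_switch c d :
  mixed_crossing (switch K l) c d = mixed_crossing K c d.
Proof.
rewrite /mixed_crossing !inside_arc_switch !gpos_switch.
by case: (d == l) => //=; congr (_ && _); rewrite eq_sym.
Qed.

Lemma Lsm_switch c :
  Lsm (switch K l) c = Lsm K c - (gd_sign K l *+ 2) *+ mixed_crossing K c l.
Proof.
rewrite /Lsm; under eq_bigl do rewrite mixed_crossing_switch.
case: (boolP (mixed_crossing K c l)) => mix_l; last first.
  rewrite subr0; apply: eq_bigr => d mix_d /=.
  by case: eqP mix_d mix_l => // ->->.
rewrite !(bigD1 l mix_l) /= eqxx.
under eq_bigr => d /andP[_ /negbTE->] do [].
by rewrite mulr2n opprD addrA [in RHS]addrAC subrr add0r addrC.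
Qed.

Lemma Lbar_switch c : Lbar (switch K l) c = Lbar K c.
Proof.
have odd_abs (x : int) : odd `|x|%N = ~~ (2 %| x)%Z by rewrite dvdzE dvdn2 negbK.
by rewrite /Lbar !odd_abs Lsm_switch rpredBr // rpredMn // dvdz2_mulr2n.
Qed.

Lemma sign_add_switch_even c : (2 %| gd_sign K c + gd_sign (switch K l) c)%Z.
Proof.
rewrite /=; case: eqP => _; first by rewrite subrr.
by rewrite -mulr2n dvdz2_mulr2n.
Qed.

Lemma gamma_add_switch :
  gamma K + gamma (switch K l) =
  \sum_(c : 'I_n) (gd_sign K c + gd_sign (switch K l) c)%:P * 'X^(Lbar K c).
Proof.
rewrite /gamma -big_split; apply: eq_bigr => c _.
by rewrite Lbar_switch polyCD mulrDl.
Qed.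

End Switch.

Theorem mainTheorem5 (n : nat) (K : gauss_diagram n) (l : 'I_n) :
  wf_gauss K -> gd_sign K l = 1 ->
  forall i : nat, (2 %| (gamma K + gamma (switch K l))`_i)%Z.
Proof.
move=> _ _ i.
rewrite gamma_add_switch coef_sum; apply: rpred_sum => c _.
by rewrite coefCM dvdz_mulr ?sign_add_switch_even.
Qed.
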